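(* Let $\langle W,\varphi,(Y,\mathbb S,\sigma)\rangle$ be a monotone one-dimensional cocycle, $(X,\mathbb S_+,\pi)$ its skew-product dynamical system, $h=\mathrm{pr}_2$, and $\tau\in\mathbb S_+$, $\tau>0$. Suppose $x_0\in X$ has precompact semi-trajectory $\{\pi(t,x_0):t\in\mathbb S_+\}$ and $y_0:=h(x_0)$ is asymptotically $\tau$-periodic, i.e. there is a $\tau$-periodic point $q\in Y$ with $\lim_{t\to+\infty}\rho(\sigma(t,y_0),\sigma(t,q))=0$. Then $\tilde\omega_{x_0}=\omega_{x_0}\cap X_q$, where $X_q=h^{-1}(q)$.
   Context: $\mathbb S=\mathbb R$ or $\mathbb Z$, $\mathbb S_+=\{t\in\mathbb S:t\ge0\}$. $(Y,\mathbb S,\sigma)$ is a two-sided dynamical system on a complete metric space $Y$ (continuous $\sigma$, $\sigma(0,y)=y$, $\sigma(t+s,y)=\sigma(t,\sigma(s,y))$); $y$ is $\tau$-periodic if $\sigma(\tau,y)=y$. $W\subseteq\mathbb R$ is an interval. A cocycle over $\sigma$ with fibre $W$ is a continuous $\varphi:\mathbb S_+\times W\times Y\to W$ with $\varphi(0,u,y)=u$ and $\varphi(t+s,u,y)=\varphi(t,\varphi(s,u,y),\sigma(s,y))$; it is monotone if $u_1\le u_2$ implies $\varphi(t,u_1,y)\le\varphi(t,u_2,y)$ for all $t\in\mathbb S_+$, $y\in Y$. The skew-product system is $X=W\times Y$, $\pi(t,(u,y))=(\varphi(t,u,y),\sigma(t,y))$, $h(u,y)=y$. $\omega_{x}$ is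 the set of limits of $\pi(t_k,x)$ with $t_k\in\mathbb S_+$, $t_k\to+\infty$; $\tilde\omega_{x}$ is the set of limits of $\pi(k_n\tau,x)$ with $k_n\in\mathbb Z_+$, $k_n\to\infty$ (the $\omega$-limit set in the discretization $\tilde\pi(k,x)=\pi(k\tau,x)$). *)

From Stdlib Require Import Reals Lra ZArith.
Open Scope R_scope.

Record CMetric (Y : Type) := {
  dist : Y -> Y -> R;
  dist_eq0 : forall x y, dist x y = 0 <-> x = y;
  dist_sym : forall x y, dist x y = dist y x;
  dist_tri : forall x y z, dist x z <= dist x y + dist y z;
  dist_complete : forall s : nat -> Y,
    (forall eps, 0 < eps -> exists N, forall m n, (N <= m)%nat -> (N <= n)%nat ->
        dist (s m) (s n) < eps) ->
    exists l, forall eps, 0 < eps -> exists N, forall n, (N <= n)%nat -> dist (s n) l < eps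
}.
Arguments dist {Y} _ _ _.

(* The time set S is either R or Z, both viewed as subsets of R. *)
Inductive TimeSet := TimeR | TimeZ.

Definition inS (S : TimeSet) (t : R) : Prop :=
  match S with TimeR => True | TimeZ => exists z : Z, t = IZR z end.

Definition inSp (S : TimeSet) (t : R) : Prop := inS S t /\ 0 <= t.

Definition is_dyn_system {Y} (M : CMetric Y) (S : TimeSet) (sigma : R -> Y -> Y) : Prop :=
  (forall y, sigma 0 y = y) /\
  (forall t s y, inS S t -> inS S s -> sigma (t + s) y = sigma t (sigma s y)) /\
  (forall t y, inS S t -> forall eps, 0 < eps -> exists delta, 0 < delta /\
     forall t' y', inS S t' -> Rabs (t' - t) < delta -> dist M y' y < delta ->
       dist M (sigma t' y') (sigma t y) < eps).

Definition is_interval (W : R -> Prop) : Prop :=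
  forall a b c, W a -> W c -> a <= b -> b <= c -> W b.

Definition is_cocycle {Y} (M : CMetric Y) (S : TimeSet) (W : R -> Prop)
    (sigma : R -> Y -> Y) (phi : R -> R -> Y -> R) : Prop :=
  (forall t u y, inSp S t -> W u -> W (phi t u y)) /\
  (forall u y, W u -> phi 0 u y = u) /\
  (forall t s u y, inSp S t -> inSp S s -> W u ->
     phi (t + s) u y = phi t (phi s u y) (sigma s y)) /\
  (forall t u y, inSp S t -> W u -> forall eps, 0 < eps -> exists delta, 0 < delta /\
     forall t' u' y', inSp S t' -> W u' -> Rabs (t' - t) < delta ->
       Rabs (u' - u) < delta -> dist M y' y < delta ->
       Rabs (phi t' u' y' - phi t u y) < eps).

Definition is_monotone (S : TimeSet) (W : R -> Prop) {Y} (phi : R -> R -> Y -> R) : Prop :=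
  forall t u1 u2 y, inSp S t -> W u1 -> W u2 -> u1 <= u2 -> phi t u1 y <= phi t u2 y.

Definition skew {Y} (sigma : R -> Y -> Y) (phi : R -> R -> Y -> R) (t : R) (x : R * Y) : R * Y :=
  (phi t (fst x) (snd x), sigma t (snd x)).

Definition cvgX {Y} (M : CMetric Y) (s : nat -> R * Y) (p : R * Y) : Prop :=
  forall eps, 0 < eps -> exists N, forall n, (N <= n)%nat ->
    Rabs (fst (s n) - fst p) < eps /\ dist M (snd (s n)) (snd p) < eps.

Definition omega {Y} (M : CMetric Y) (S : TimeSet) (W : R -> Prop)
    (sigma : R -> Y -> Y) (phi : R -> R -> Y -> R) (x p : R * Y) : Prop :=
  W (fst p) /\
  exists tk : nat -> R, (forall n, inSp S (tk n)) /\
    (forall B, exists N, forall n, (N <= n)%nat -> B <= tk n) /\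
    cvgX M (fun n => skew sigma phi (tk n) x) p.

Definition omega_tilde {Y} (M : CMetric Y) (W : R -> Prop)
    (sigma : R -> Y -> Y) (phi : R -> R -> Y -> R) (tau : R) (x p : R * Y) : Prop :=
  W (fst p) /\
  exists kn : nat -> nat,
    (forall B, exists N, forall n, (N <= n)%nat -> (B <= kn n)%nat) /\
    cvgX M (fun n => skew sigma phi (INR (kn n) * tau) x) p.

(* the semi-trajectory {pi(t,x) : t in S_+} is precompact in X
   (sequential relative compactness: every sequence in it has a subsequence
   converging to a point of X) *)
Definition precompact_semitraj {Y} (M : CMetric Y) (S : TimeSet) (W : R -> Prop)
    (sigma : R -> Y -> Y) (phi : R -> R -> Y -> R) (x : R * Y) : Prop :=
  forall tn : nat -> R, (forall n, inSp S (tn n)) ->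
    exists (g : nat -> nat) (p : R * Y),
      (forall n, (g n < g (Datatypes.S n))%nat) /\ W (fst p) /\
      cvgX M (fun n => skew sigma phi (tn (g n)) x) p.

Definition asymptotically_close {Y} (M : CMetric Y) (S : TimeSet)
    (sigma : R -> Y -> Y) (y q : Y) : Prop :=
  forall eps, 0 < eps -> exists T, forall t, inS S t -> T <= t ->
    dist M (sigma t y) (sigma t q) < eps.

(* Write [t_k = s_k + n_k tau] with [0 <= s_k <= tau].  Along a subsequence,
   [pi (n_k tau, x0) -> (v, q)] (the base orbit is asymptotic to the [tau]-periodic [q])
   and [s_k -> s], so an omega-limit point over [q] is [(phi (s, v, q), q)] with
   [sigma s q = q].  Monotonicity of the fibre maps forces [v] to be a fixed point of
   [phi (tau, ., q)], and then also of [phi (s, ., q)], because by Dirichlet some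
   multiples of [s] are close to multiples of [tau].  Hence the point is [(v, q)], a
   limit of [pi (n_k tau, x0)]. *)

From Stdlib Require Import Reals Lra Lia ZArith.
(* After [Reals], so that [dist] refers to the metric of [CMetric]. *)
From Stdlib Require Rtopology.
Open Scope R_scope.

Definition nat_divergent (kn : nat -> nat) : Prop :=
  forall B, exists N, forall n, (N <= n)%nat -> (B <= kn n)%nat.

Definition cluster_value (u : nat -> R) (c : R) : Prop :=
  forall eps, 0 < eps -> forall N, exists n, (N <= n)%nat /\ Rabs (u n - c) < eps.

Lemma dist_refl {Y} (M : CMetric Y) x : dist M x x = 0.
Proof. now apply dist_eq0. Qed.

Lemma dist_ge0 {Y} (M : CMetric Y) x y : 0 <= dist M x y.
Proof.
  pose proof (dist_tri Y M x y x) as h.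
  rewrite dist_refl, (dist_sym Y M y x) in h. lra.
Qed.

Lemma dist_small_eq {Y} (M : CMetric Y) x y :
  (forall eps, 0 < eps -> dist M x y < eps) -> x = y.
Proof.
  intros h. apply (dist_eq0 Y M).
  destruct (Rle_lt_or_eq_dec _ _ (dist_ge0 M x y)) as [lt|eq]; [|lra].
  specialize (h _ lt). lra.
Qed.

Lemma subseq_limit_eq {Y} (M : CMetric Y) (y : nat -> Y) (q q' : Y) (kn : nat -> nat) :
  nat_divergent kn ->
  (forall eps, 0 < eps -> exists N, forall m, (N <= m)%nat -> dist M (y m) q < eps) ->
  (forall eps, 0 < eps -> exists N, forall n, (N <= n)%nat -> dist M (y (kn n)) q' < eps) ->
  q' = q.
Proof.
  intros kdiv ycv sub. apply (dist_small_eq M). intros eps he.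
  destruct (ycv (eps / 2)) as [N1 h1]; [lra|].
  destruct (kdiv N1) as [N2 h2].
  destruct (sub (eps / 2)) as [N3 h3]; [lra|].
  specialize (h1 (kn (max N2 N3)) (h2 _ (Nat.le_max_l _ _))).
  specialize (h3 _ (Nat.le_max_r N2 N3)).
  pose proof (dist_tri Y M q' (y (kn (max N2 N3))) q) as tri.
  rewrite (dist_sym Y M q' (y _)) in tri. lra.
Qed.

Lemma cvgX_fst {Y} (M : CMetric Y) s p :
  cvgX M s p -> forall eps, 0 < eps -> exists N, forall n, (N <= n)%nat ->
    Rabs (fst (s n) - fst p) < eps.
Proof. intros cv eps he. destruct (cv eps he) as [N h]. exists N. apply h. Qed.

Lemma cvgX_snd {Y} (M : CMetric Y) s p :
  cvgX M s p -> forall eps, 0 < eps -> exists N, forall n, (N <= n)%nat ->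
    dist M (snd (s n)) (snd p) < eps.
Proof. intros cv eps he. destruct (cv eps he) as [N h]. exists N. apply h. Qed.

Lemma cluster_of_subseq (u : nat -> R) (kn : nat -> nat) c :
  nat_divergent kn ->
  (forall eps, 0 < eps -> exists N, forall n, (N <= n)%nat -> Rabs (u (kn n) - c) < eps) ->
  cluster_value u c.
Proof.
  intros kdiv cv eps he N.
  destruct (cv eps he) as [N1 h1]. destruct (kdiv N) as [N2 h2].
  exists (kn (max N1 N2)). split; [apply h2|apply h1]; lia.
Qed.

Lemma bounded_cluster_value (u : nat -> R) a b :
  (forall n, a <= u n <= b) -> exists c, a <= c <= b /\ cluster_value u c.
Proof.
  intros hu.
  destruct (Rtopology.Bolzano_Weierstrass u _ (Rtopology.compact_P3 a b) hu) as [c adh].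
  assert (cl : cluster_value u c).
  { intros eps he N. apply (adh (Rtopology.disc c (mkposreal eps he)) N).
    exists (mkposreal eps he). intros x hx. exact hx. }
  exists c. split; [|exact cl].
  split; apply Rnot_lt_le; intros out.
  - destruct (cl (a - c) ltac:(lra) 0%nat) as [n [_ hn]].
    apply Rabs_def2 in hn. specialize (hu n). lra.
  - destruct (cl (c - b) ltac:(lra) 0%nat) as [n [_ hn]].
    apply Rabs_def2 in hn. specialize (hu n). lra.
Qed.

Lemma strictly_increasing_ge (g : nat -> nat) :
  (forall n, (g n < g (S n))%nat) -> forall n, (n <= g n)%nat.
Proof. intros inc n. induction n; [lia|]. specialize (inc n). lia. Qed.

Lemma inS_0 S : inS S 0.
Proof. destruct S; simpl; [trivial|]. now exists 0%Z. Qed.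

Lemma inS_add S a b : inS S a -> inS S b -> inS S (a + b).
Proof.
  destruct S; simpl; [trivial|]. intros [x ->] [y ->].
  exists (x + y)%Z. now rewrite plus_IZR.
Qed.

Lemma inS_sub S a b : inS S a -> inS S b -> inS S (a - b).
Proof.
  destruct S; simpl; [trivial|]. intros [x ->] [y ->].
  exists (x - y)%Z. now rewrite minus_IZR.
Qed.

Lemma inS_mult_INR S k t : inS S t -> inS S (INR k * t).
Proof.
  intros ht. induction k as [|k IH].
  - rewrite Rmult_0_l. apply inS_0.
  - rewrite S_INR, Rmult_plus_distr_r, Rmult_1_l. now apply inS_add.
Qed.

Lemma inSp_mult_INR S k t : inSp S t -> inSp S (INR k * t).
Proof.
  intros [ht t0]. split; [now apply inS_mult_INR|].
  apply Rmult_le_pos; [apply pos_INR|exact t0].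
Qed.

Lemma inS_cluster S (u : nat -> R) c :
  (forall n, inS S (u n)) -> cluster_value u c -> inS S c.
Proof.
  destruct S; simpl; [trivial|]. intros hu cl.
  destruct (cl (1 / 2) ltac:(lra) 0%nat) as [n1 [_ h1]]. destruct (hu n1) as [z1 e1].
  exists z1. apply cond_eq. intros eps he.
  destruct (cl (Rmin eps (1 / 2)) ltac:(apply Rmin_pos; lra) 0%nat) as [n2 [_ h2]].
  destruct (hu n2) as [z2 e2].
  pose proof (Rmin_l eps (1 / 2)). pose proof (Rmin_r eps (1 / 2)).
  apply Rabs_def2 in h1, h2.
  assert (z2 = z1) as <-.
  { apply Zminus_eq, one_IZR_lt1. rewrite minus_IZR, <- e1, <- e2. lra. }
  rewrite <- e2, Rabs_minus_sym. apply Rabs_def1; lra.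
Qed.

Definition period_count (tau t : R) : nat := Z.to_nat (Int_part (t / tau)).

Lemma period_count_spec tau t : 0 < tau -> 0 <= t ->
  INR (period_count tau t) * tau <= t < INR (period_count tau t) * tau + tau.
Proof.
  intros tau0 t0. destruct (base_Int_part (t / tau)) as [lo hi].
  assert (0 <= t / tau) by (apply Rle_mult_inv_pos; lra).
  assert (0 <= Int_part (t / tau))%Z.
  { apply Z.lt_succ_r, lt_IZR. rewrite succ_IZR. lra. }
  unfold period_count. rewrite INR_IZR_INZ, Z2Nat.id by assumption.
  assert (t = t / tau * tau) by (field; lra).
  split; nra.
Qed.

Lemma period_count_le tau t t' : 0 < tau -> 0 <= t <= t' ->
  (period_count tau t <= period_count tau t')%nat.
Proof.
  intros tau0 [t0 tt']. apply Nat.nlt_ge. intros lt.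
  apply le_INR in lt. rewrite S_INR in lt.
  pose proof (period_count_spec tau t tau0 t0).
  pose proof (period_count_spec tau t' tau0 ltac:(lra)). nra.
Qed.

(* Dirichlet: the fractional parts of [k s / tau] cluster, so differences of indices
   give multiples of [s] arbitrarily close to multiples of [tau]. *)
Lemma multiple_near_period_multiple s tau d (N : nat) : 0 < s -> 0 < tau -> 0 < d ->
  exists k m : nat, (N <= k)%nat /\ Rabs (INR k * s - INR m * tau) < d.
Proof.
  intros s0 tau0 d0.
  set (n i := period_count tau (INR i * s)).
  set (r i := INR i * s - INR (n i) * tau).
  assert (is0 : forall i, 0 <= INR i * s) by (intros i; pose proof (pos_INR i); nra).
  assert (rb : forall i, 0 <= r i <= tau).
  { intros i. pose proof (period_count_spec tau _ tau0 (is0 i)). unfold r, n. lra. }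
  destruct (bounded_cluster_value r 0 tau rb) as [c [_ cl]].
  destruct (cl (d / 2) ltac:(lra) 0%nat) as [i [_ hi]].
  destruct (cl (d / 2) ltac:(lra) (i + N)%nat) as [j [ij hj]].
  assert (nij : (n i <= n j)%nat).
  { apply period_count_le; [exact tau0|]. split; [apply is0|].
    apply Rmult_le_compat_r; [lra|]. apply le_INR. lia. }
  exists (j - i)%nat, (n j - n i)%nat. split; [lia|].
  rewrite !minus_INR by lia.
  replace ((INR j - INR i) * s - (INR (n j) - INR (n i)) * tau) with (r j - r i)
    by (unfold r; ring).
  apply Rabs_def2 in hi, hj. apply Rabs_def1; lra.
Qed.

Section MonotoneRecursion.

Variables (W : R -> Prop) (G : nat -> R -> R) (F : nat -> R) (v L : R).
Hypothesis G_mono : forall m a b, W a -> W b -> a <= b -> G m a <= G m b.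
Hypothesis F_succ : forall m, F (S m) = G m (F m).
Hypothesis F_in : forall m, W (F m).
Hypothesis v_in : W v.
Hypothesis G_near : forall c, 0 < c -> exists d N, 0 < d /\
  forall m u, (N <= m)%nat -> W u -> Rabs (u - v) < d -> Rabs (G m u - L) < c.
Hypothesis F_cluster : cluster_value F v.

(* Once [F] comes close enough to [v], monotonicity keeps it below [(v + L) / 2] forever,
   which contradicts [v] being a cluster value. *)
Lemma monotone_recursion_not_lt : ~ L < v.
Proof.
  intros Lv.
  destruct (G_near ((v - L) / 2)) as [d [N [d0 near]]]; [lra|].
  destruct (F_cluster (Rmin d ((v - L) / 2)) ltac:(apply Rmin_pos; lra) N)
    as [m0 [m0N close]].
  pose proof (Rmin_l d ((v - L) / 2)). pose proof (Rmin_r d ((v - L) / 2)).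
  assert (below : forall j, F (S j + m0) < (v + L) / 2).
  { induction j as [|j IH]; simpl; rewrite F_succ.
    - specialize (near m0 (F m0) m0N (F_in m0) ltac:(lra)).
      apply Rabs_def2 in near. lra.
    - simpl in IH.
      pose proof (G_mono (S (j + m0)) (F (S (j + m0))) v (F_in _) v_in ltac:(lra)).
      specialize (near (S (j + m0)) v ltac:(lia) v_in).
      rewrite Rminus_diag, Rabs_R0 in near. specialize (near d0).
      apply Rabs_def2 in near. lra. }
  destruct (F_cluster ((v - L) / 2) ltac:(lra) (S m0)) as [m [m0m hm]].
  specialize (below (m - S m0)%nat).
  replace (S (m - S m0) + m0)%nat with m in below by lia.
  apply Rabs_def2 in hm. lra.
Qed.

End MonotoneRecursion.

(* The case [L > v] is the case [L < v] for the reflected recursion [u |-> - G_m (- u)]. *)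
Lemma monotone_recursion_fixed (W : R -> Prop) (G : nat -> R -> R) (F : nat -> R) v L :
  (forall m a b, W a -> W b -> a <= b -> G m a <= G m b) ->
  (forall m, F (S m) = G m (F m)) ->
  (forall m, W (F m)) -> W v ->
  (forall c, 0 < c -> exists d N, 0 < d /\
     forall m u, (N <= m)%nat -> W u -> Rabs (u - v) < d -> Rabs (G m u - L) < c) ->
  cluster_value F v ->
  L = v.
Proof.
  intros mono succ Fin vin near cl.
  destruct (Rtotal_order L v) as [lt|[eq|gt]]; [|exact eq|];
    exfalso; [eapply monotone_recursion_not_lt; eauto|].
  apply (monotone_recursion_not_lt (fun u => W (- u)) (fun m u => - G m (- u))
           (fun m => - F m) (- v) (- L)); [| | |now rewrite Ropp_involutive| | |lra].
  - intros m a b ha hb ab. apply Ropp_le_contravar, mono; [exact hb|exact ha|lra].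
  - intros m. now rewrite succ, Ropp_involutive.
  - intros m. now rewrite Ropp_involutive.
  - intros c c0. destruct (near c c0) as [d [N [d0 hnear]]]. exists d, N.
    split; [exact d0|]. intros m u mN hu ud.
    replace (- G m (- u) - - L) with (- (G m (- u) - L)) by ring.
    rewrite Rabs_Ropp. apply hnear; [exact mN|exact hu|].
    replace (- u - v) with (- (u - - v)) by ring. now rewrite Rabs_Ropp.
  - intros eps e0 N. destruct (cl eps e0 N) as [n [nN hn]]. exists n. split; [exact nN|].
    replace (- F n - - v) with (- (F n - v)) by ring. now rewrite Rabs_Ropp.
Qed.

Section SkewProduct.

Variables (Y : Type) (M : CMetric Y) (Ts : TimeSet) (sigma : R -> Y -> Y)
  (W : R -> Prop) (phi : R -> R -> Y -> R).
Hypothesis sys : is_dyn_system M Ts sigma.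
Hypothesis coc : is_cocycle M Ts W sigma phi.
Hypothesis mono : is_monotone Ts W phi.

Lemma sigma_mult_fixed t y : inS Ts t -> sigma t y = y -> forall n, sigma (INR n * t) y = y.
Proof.
  destruct sys as [sigma0 [sigma_add _]]. intros ht yfix n. induction n as [|n IH].
  - rewrite Rmult_0_l. apply sigma0.
  - rewrite S_INR, Rmult_plus_distr_r, Rmult_1_l, Rplus_comm, sigma_add, IH;
      [exact yfix|exact ht|now apply inS_mult_INR].
Qed.

Lemma phi_mult_succ t u y n : inSp Ts t -> W u ->
  phi (INR (S n) * t) u y = phi t (phi (INR n * t) u y) (sigma (INR n * t) y).
Proof.
  destruct coc as [_ [_ [phi_add _]]]. intros ht hu.
  rewrite S_INR, Rmult_plus_distr_r, Rmult_1_l, Rplus_comm.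
  apply phi_add; [exact ht|now apply inSp_mult_INR|exact hu].
Qed.

Lemma phi_mult_fixed t u y : inSp Ts t -> sigma t y = y -> W u -> phi t u y = u ->
  forall n, phi (INR n * t) u y = u.
Proof.
  destruct coc as [_ [phi0 _]]. intros ht sfix hu pfix n. induction n as [|n IH].
  - rewrite Rmult_0_l. now apply phi0.
  - now rewrite phi_mult_succ, IH, sigma_mult_fixed by (try apply ht; assumption).
Qed.

Lemma skew_add t s x : inSp Ts t -> inSp Ts s -> W (fst x) ->
  skew sigma phi (t + s) x = skew sigma phi t (skew sigma phi s x).
Proof.
  destruct sys as [_ [sigma_add _]]. destruct coc as [_ [_ [phi_add _]]].
  intros ht hs hx. unfold skew; simpl.
  now rewrite phi_add, sigma_add by (try apply ht; try apply hs; assumption).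
Qed.

Lemma skew_continuous t x : inSp Ts t -> W (fst x) ->
  forall eps, 0 < eps -> exists d, 0 < d /\ forall t' x', inSp Ts t' -> W (fst x') ->
    Rabs (t' - t) < d -> Rabs (fst x' - fst x) < d -> dist M (snd x') (snd x) < d ->
    Rabs (fst (skew sigma phi t' x') - fst (skew sigma phi t x)) < eps /\
    dist M (snd (skew sigma phi t' x')) (snd (skew sigma phi t x)) < eps.
Proof.
  destruct sys as [_ [_ sigma_cont]]. destruct coc as [_ [_ [_ phi_cont]]].
  intros ht hx eps e0.
  destruct (phi_cont t (fst x) (snd x) ht hx eps e0) as [d1 [d10 h1]].
  destruct (sigma_cont t (snd x) (proj1 ht) eps e0) as [d2 [d20 h2]].
  exists (Rmin d1 d2). split; [now apply Rmin_pos|].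
  pose proof (Rmin_l d1 d2). pose proof (Rmin_r d1 d2).
  intros t' x' ht' hx' dt du dy. split.
  - apply h1; [exact ht'|exact hx'|lra..].
  - apply h2; [apply ht'|lra..].
Qed.

Lemma skew_limit_shift x (a b : nat -> R) z s p :
  (forall n, inSp Ts (a n)) -> (forall n, inSp Ts (b n)) -> W (fst x) -> W (fst z) ->
  inSp Ts s -> cvgX M (fun n => skew sigma phi (a n) x) z -> cluster_value b s ->
  cvgX M (fun n => skew sigma phi (b n + a n) x) p ->
  p = skew sigma phi s z.
Proof.
  destruct coc as [phi_in _].
  intros ha hb hx hz hs acv bcl pcv.
  assert (close : forall eps, 0 < eps ->
    Rabs (fst p - fst (skew sigma phi s z)) < eps /\
    dist M (snd p) (snd (skew sigma phi s z)) < eps).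
  { intros eps e0.
    destruct (skew_continuous s z hs hz (eps / 2)) as [d [d0 cont]]; [lra|].
    destruct (acv d d0) as [N1 h1]. destruct (pcv (eps / 2)) as [N2 h2]; [lra|].
    destruct (bcl d d0 (max N1 N2)) as [n [nN hn]].
    destruct (h1 n ltac:(lia)) as [h1u h1y]. destruct (h2 n ltac:(lia)) as [h2u h2y].
    rewrite skew_add in h2u, h2y by auto.
    destruct (cont (b n) (skew sigma phi (a n) x) (hb n) (phi_in _ _ _ (ha n) hx)
                hn h1u h1y) as [cu cy].
    set (w := skew sigma phi (b n) (skew sigma phi (a n) x)) in *.
    pose proof (dist_tri Y M (snd p) (snd w) (snd (skew sigma phi s z))).
    rewrite (dist_sym Y M (snd p) (snd w)) in *.
    apply Rabs_def2 in cu, h2u. split; [apply Rabs_def1|]; lra. }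
  apply injective_projections.
  - apply cond_eq. intros eps e0. apply (close eps e0).
  - apply (dist_small_eq M). intros eps e0. apply (close eps e0).
Qed.

Variables (tau : R) (q : Y).
Hypothesis tau_pos : 0 < tau.
Hypothesis tau_in : inSp Ts tau.
Hypothesis q_periodic : sigma tau q = q.

Lemma sigma_periods_cvg y : asymptotically_close M Ts sigma y q ->
  forall eps, 0 < eps -> exists N, forall m, (N <= m)%nat ->
    dist M (sigma (INR m * tau) y) q < eps.
Proof.
  intros yq eps e0. destruct (yq eps e0) as [T hT].
  destruct (INR_archimed tau T tau_pos) as [N hN]. exists N. intros m mN.
  rewrite <- (sigma_mult_fixed tau q (proj1 tau_in) q_periodic m).
  apply hT; [apply inS_mult_INR, tau_in|].
  apply le_INR in mN. nra.
Qed.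

Lemma phi_period_fixed_of_cluster u0 y0 v : W u0 -> W v ->
  asymptotically_close M Ts sigma y0 q ->
  cluster_value (fun m => phi (INR m * tau) u0 y0) v ->
  phi tau v q = v.
Proof.
  destruct coc as [phi_in [_ [_ phi_cont]]]. intros u0W vW y0q cl.
  apply (monotone_recursion_fixed W (fun m u => phi tau u (sigma (INR m * tau) y0))
           (fun m => phi (INR m * tau) u0 y0)); [| |intros m| exact vW| |exact cl].
  - intros m a b. now apply mono.
  - intros m. now apply phi_mult_succ.
  - apply phi_in; [now apply inSp_mult_INR|exact u0W].
  - intros c c0. destruct (phi_cont tau v q tau_in vW c c0) as [d [d0 cont]].
    destruct (sigma_periods_cvg y0 y0q d d0) as [N hN]. exists d, N.
    split; [exact d0|]. intros m u mN uW uv.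
    apply cont; [exact tau_in|exact uW| |exact uv|now apply hN].
    now rewrite Rminus_diag, Rabs_R0.
Qed.

Section FixedFibrePoint.

Variable v : R.
Hypothesis v_in : W v.
Hypothesis v_fixed : phi tau v q = v.

Lemma phi_add_periods d m : inSp Ts d -> phi (d + INR m * tau) v q = phi d v q.
Proof.
  destruct coc as [_ [_ [phi_add _]]]. intros hd.
  assert (periods_in : inSp Ts (INR m * tau)) by now apply inSp_mult_INR.
  rewrite phi_add, phi_mult_fixed, sigma_mult_fixed by (apply tau_in || assumption).
  reflexivity.
Qed.

Lemma phi_near_period_multiples c : 0 < c -> exists d, 0 < d /\
  forall t m, inSp Ts t -> Rabs (t - INR m * tau) < d -> Rabs (phi t v q - v) < c.
Proof.
  destruct coc as [_ [phi0 [_ phi_cont]]]. intros c0.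
  assert (zero_in : inSp Ts 0) by (split; [apply inS_0|lra]).
  destruct (phi_cont 0 v q zero_in v_in c c0) as [d1 [d10 near0]].
  destruct (phi_cont tau v q tau_in v_in c c0) as [d2 [d20 near_tau]].
  rewrite phi0 in near0 by exact v_in. rewrite v_fixed in near_tau.
  exists (Rmin d1 (Rmin d2 tau)). split; [repeat apply Rmin_pos; lra|].
  pose proof (Rmin_l d1 (Rmin d2 tau)). pose proof (Rmin_r d1 (Rmin d2 tau)).
  pose proof (Rmin_l d2 tau). pose proof (Rmin_r d2 tau).
  intros t m [tS t0] tm. apply Rabs_def2 in tm.
  assert (qq : dist M q q < d1 /\ dist M q q < d2) by (rewrite dist_refl; lra).
  assert (diff_in : inS Ts (t - INR m * tau))
    by (apply inS_sub, inS_mult_INR, tau_in; exact tS).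
  destruct (Rle_or_lt (INR m * tau) t) as [mt|tm'].
  - replace t with ((t - INR m * tau) + INR m * tau) by ring.
    rewrite phi_add_periods by (split; [exact diff_in|lra]).
    apply near0; [split; [exact diff_in|lra]|exact v_in|apply Rabs_def1; lra|..];
      [rewrite Rminus_diag, Rabs_R0; lra|apply qq].
  - destruct m as [|m]; [rewrite Rmult_0_l in tm'; lra|].
    assert (shift_in : inSp Ts (tau + (t - INR (Datatypes.S m) * tau))).
    { split; [apply inS_add; [apply tau_in|exact diff_in]|lra]. }
    replace t with ((tau + (t - INR (Datatypes.S m) * tau)) + INR m * tau)
      by (rewrite S_INR; ring).
    rewrite phi_add_periods by exact shift_in.
    apply near_tau; [exact shift_in|exact v_in|apply Rabs_def1; lra|..];
      [rewrite Rminus_diag, Rabs_R0; lra|apply qq].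
Qed.

(* By Dirichlet, multiples of [s] come close to multiples of [tau], where [phi (., v, q)]
   is close to [v]; so [v] is a cluster value of the iterates of [phi (s, ., q)]. *)
Lemma phi_fixed_of_sigma_fixed s : inSp Ts s -> sigma s q = q -> phi s v q = v.
Proof.
  destruct coc as [phi_in [phi0 [_ phi_cont]]]. intros [sS s0] sq.
  destruct (Rle_lt_or_eq_dec _ _ s0) as [spos|<-]; [|now apply phi0].
  assert (s_in : inSp Ts s) by (split; assumption).
  apply (monotone_recursion_fixed W (fun _ u => phi s u q) (fun k => phi (INR k * s) v q));
    [| |intros k|exact v_in| |].
  - intros _ a b. now apply mono.
  - intros k. now rewrite phi_mult_succ, sigma_mult_fixed.
  - apply phi_in; [now apply inSp_mult_INR|exact v_in].
  - intros c c0. destruct (phi_cont s v q s_in v_in c c0) as [d [d0 cont]].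
    exists d, 0%nat. split; [exact d0|]. intros _ u _ uW uv.
    apply cont; [exact s_in|exact uW|rewrite Rminus_diag, Rabs_R0; lra|exact uv|].
    rewrite dist_refl. exact d0.
  - intros eps e0 N. destruct (phi_near_period_multiples eps e0) as [d [d0 near]].
    destruct (multiple_near_period_multiple s tau d N spos tau_pos d0) as [k [m [kN km]]].
    exists k. split; [exact kN|]. apply (near _ m); [now apply inSp_mult_INR|exact km].
Qed.

End FixedFibrePoint.

Lemma omega_tilde_omega x p :
  omega_tilde M W sigma phi tau x p -> omega M Ts W sigma phi x p.
Proof.
  intros [pW [kn [kdiv kcv]]]. split; [exact pW|].
  exists (fun n => INR (kn n) * tau). split; [intros n; now apply inSp_mult_INR|].
  split; [|exact kcv].
  intros B. destruct (INR_archimed tau B tau_pos) as [K hK].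
  destruct (kdiv K) as [N hN]. exists N. intros n nN.
  specialize (hN n nN). apply le_INR in hN. nra.
Qed.

Lemma omega_point_shift x p : W (fst x) -> precompact_semitraj M Ts W sigma phi x ->
  omega M Ts W sigma phi x p ->
  exists kn z s, nat_divergent kn /\ W (fst z) /\
    cvgX M (fun n => skew sigma phi (INR (kn n) * tau) x) z /\
    inSp Ts s /\ p = skew sigma phi s z.
Proof.
  intros xW precomp [_ [tk [tk_in [tk_div tk_cv]]]].
  set (nk n := period_count tau (tk n)). set (sk n := tk n - INR (nk n) * tau).
  assert (sk_bounds : forall n, 0 <= sk n <= tau).
  { intros n. pose proof (period_count_spec tau (tk n) tau_pos (proj2 (tk_in n))).
    unfold sk, nk. lra. }
  assert (sk_in : forall n, inSp Ts (sk n)).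
  { intros n. split; [|apply sk_bounds].
    apply inS_sub; [apply tk_in|apply inS_mult_INR, tau_in]. }
  destruct (precomp (fun n => INR (nk n) * tau)) as [g [z [g_inc [zW g_cv]]]];
    [intros n; now apply inSp_mult_INR|].
  pose proof (strictly_increasing_ge g g_inc) as g_ge.
  destruct (bounded_cluster_value (fun n => sk (g n)) 0 tau (fun n => sk_bounds (g n)))
    as [s [[s0 _] s_cl]].
  assert (s_in : inSp Ts s).
  { split; [|exact s0]. exact (inS_cluster Ts _ s (fun n => proj1 (sk_in (g n))) s_cl). }
  exists (fun n => nk (g n)), z, s.
  split; [|split; [exact zW|split; [exact g_cv|split; [exact s_in|]]]].
  - intros B. destruct (tk_div (INR B * tau + tau)) as [N hN]. exists N. intros n nN.
    specialize (hN (g n) ltac:(specialize (g_ge n); lia)).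
    specialize (sk_bounds (g n)). unfold sk in sk_bounds.
    apply INR_le. nra.
  - apply (skew_limit_shift x (fun n => INR (nk (g n)) * tau) (fun n => sk (g n)));
      try assumption; [intros n; now apply inSp_mult_INR|intros n; apply sk_in|].
    intros eps e0. destruct (tk_cv eps e0) as [N hN]. exists N. intros n nN.
    unfold sk. rewrite Rplus_comm, Rplus_minus.
    apply hN. specialize (g_ge n). lia.
Qed.

End SkewProduct.

Theorem mainTheorem5 (Y : Type) (M : CMetric Y) (S : TimeSet)
    (sigma : R -> Y -> Y) (W : R -> Prop) (phi : R -> R -> Y -> R)
    (tau : R) (x0 : R * Y) (q : Y) :
  is_dyn_system M S sigma ->
  is_interval W ->
  is_cocycle M S W sigma phi ->
  is_monotone S W phi ->
  inSp S tau -> 0 < tau ->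
  W (fst x0) ->
  precompact_semitraj M S W sigma phi x0 ->
  sigma tau q = q ->
  asymptotically_close M S sigma (snd x0) q ->
  forall p : R * Y,
    omega_tilde M W sigma phi tau x0 p <-> (omega M S W sigma phi x0 p /\ snd p = q).
Proof.
  intros sys _ coc mono tau_in tau_pos x0W precomp q_periodic y0q p.
  assert (y0_cvg := sigma_periods_cvg Y M S sigma sys tau q tau_pos tau_in q_periodic
                      (snd x0) y0q).
  split.
  - intros om. split; [now apply (omega_tilde_omega Y M S sigma W phi tau)|].
    destruct om as [_ [kn [kdiv kcv]]].
    exact (subseq_limit_eq M _ q (snd p) kn kdiv y0_cvg (cvgX_snd M _ p kcv)).
  - intros [om psnd].
    destruct (omega_point_shift Y M S sigma W phi sys coc tau tau_pos tau_in x0 p x0W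
                precomp om) as [kn [[v y] [s [kdiv [vW [kcv [s_in pE]]]]]]].
    assert (y = q) as ->
      by exact (subseq_limit_eq M _ q y kn kdiv y0_cvg (cvgX_snd M _ _ kcv)).
    assert (v_fixed : phi tau v q = v)
      by exact (phi_period_fixed_of_cluster Y M S sigma W phi sys coc mono tau q tau_pos
                  tau_in q_periodic (fst x0) (snd x0) v x0W vW y0q
                  (cluster_of_subseq _ kn v kdiv (cvgX_fst M _ _ kcv))).
    assert (sq : sigma s q = q) by (rewrite pE in psnd; exact psnd).
    assert (p = (v, q)) as ->.
    { rewrite pE. unfold skew; simpl. rewrite sq.
      now rewrite (phi_fixed_of_sigma_fixed Y M S sigma W phi sys coc mono tau q tau_pos
                     tau_in q_periodic v vW v_fixed s s_in sq). }
    split; [exact vW|]. now exists kn.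
Qed.
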